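(* Let $K$ be a field of characteristic zero and $g\ge 3$. Then $$\chi(F_{g,3})=\dim Z(F_{g,3})+\binom{g}{2}-g=\dim F_{g,3}-2g=\frac{2g^3+3g^2-11g}{6}.$$
   Context: For a finite-dimensional Lie algebra $\mathfrak{h}$ over $K$ and $\ell\in\mathfrak{h}^*$, let $\mathfrak{h}(\ell)=\{y\in\mathfrak{h}\mid \ell([x,y])=0\ \forall x\in\mathfrak{h}\}$; the index is $\chi(\mathfrak{h})=\min_{\ell\in\mathfrak{h}^*}\dim\mathfrak{h}(\ell)$. $Z(\mathfrak{h})$ denotes the center. Lower central series: $\mathfrak{h}^1=\mathfrak{h}$, $\mathfrak{h}^{k+1}=[\mathfrak{h},\mathfrak{h}^k]$. $F_g$ is the free Lie algebra on $g$ generators and $F_{g,c}:=F_g/F_g^{c+1}$. One has $\dim F_{g,3}=g(g+1)(2g+1)/6$ and $\dim Z(F_{g,3})=(g^3-g)/3$. *)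

From HB Require Import structures.
From mathcomp Require Import all_boot all_order all_algebra.
Set Implicit Arguments. Unset Strict Implicit. Unset Printing Implicit Defensive.
Import GRing.Theory.
Local Open Scope ring_scope.

Section Lie.
Variable K : fieldType.

Definition is_lie (M : lmodType K) (br : M -> M -> M) : Prop :=
  [/\ (forall (a : K) x y z, br (a *: x + y) z = a *: br x z + br y z),
      (forall (a : K) x y z, br z (a *: x + y) = a *: br z x + br z y),
      (forall x, br x x = 0) &
      (forall x y z, br x (br y z) + br y (br z x) + br z (br x y) = 0)].

Definition nilp3 (M : lmodType K) (br : M -> M -> M) : Prop :=
  forall a b c d, br a (br b (br c d)) = 0.

Definition lie_hom (L M : lmodType K) (brL : L -> L -> L) (brM : M -> M -> M)
  (f : L -> M) : Prop :=
  (forall (a : K) x y, f (a *: x + y) = a *: f x + f y) /\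
  (forall x y, f (brL x y) = brM (f x) (f y)).

(* (L, br, x) is the free 3-step nilpotent Lie algebra F_{g,3} = F_g / F_g^4
   on the generators x_0, ..., x_{g-1}: characterized by its universal property
   among Lie algebras of nilpotency class <= 3. *)
Definition free_nilp3 (g : nat) (L : lmodType K) (br : L -> L -> L)
  (x : 'I_g -> L) : Prop :=
  [/\ is_lie br, nilp3 br &
      forall (M : lmodType K) (brM : M -> M -> M) (m : 'I_g -> M),
        is_lie brM -> nilp3 brM ->
        (exists f : L -> M, lie_hom br brM f /\ forall i, f (x i) = m i) /\
        (forall f1 f2 : L -> M,
            lie_hom br brM f1 -> (forall i, f1 (x i) = m i) ->
            lie_hom br brM f2 -> (forall i, f2 (x i) = m i) ->
            forall v, f1 v = f2 v)].

Variable L : vectType K.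
Variable br : L -> L -> L.

Definition lie_center : {vspace L} :=
  lker (linfun (fun y : L => linfun (fun x : L => br x y))).

Definition stab (l : 'Hom(L, K^o)) : {vspace L} :=
  lker (linfun (fun y : L => (linfun (fun x : L => l (br x y)) : 'Hom(L, K^o)))).

Definition lie_index (n : nat) : Prop :=
  (exists l : 'Hom(L, K^o), \dim (stab l) = n) /\
  (forall l : 'Hom(L, K^o), (n <= \dim (stab l))%N).

End Lie.

(* The Hall elements x_i, [x_i, x_j] (i < j) and [x_i, [x_j, x_k]] (j < k, j <= i) form a
   basis of F_{g,3}.  They span, since their span is closed under the bracket and contains
   the generators.  They are independent: for each Hall element t there is a homomorphism to
   the strictly upper triangular 4x4 matrices, sending every generator into the span of
   E12, E23, E34, under which one matrix entry vanishes on all Hall elements except t, where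
   it is +-1 or +-2.  Hence dim F_{g,3} = g + C(g,2) + (g^3 - g)/3, and the same entries show
   that no nonzero combination of Hall elements of degree <= 2 is central.

   The span W of the Hall elements of degree >= 2 is abelian, so h(l) contains the w in W
   with l([x_i, w]) = 0 for all i, and dim h(l) >= dim W - g = dim F_{g,3} - 2g.  Conversely,
   for a suitable l vanishing on the [x_a, x_b] and with l([x_a, u_m]) = delta_am for some
   u_m in [F, F], the 2g vectors x_i, u_m are dual to forms vanishing on h(l). *)

From HB Require Import structures.
From mathcomp Require Import all_boot all_order all_algebra.
From mathcomp Require Import zify ring.
From Stdlib Require Import IndefiniteDescription.
Set Implicit Arguments. Unset Strict Implicit. Unset Printing Implicit Defensive.
Import GRing.Theory.

(* A label (d, i, j, k) names the Hall element x_i, [x_i, x_j] or [x_i, [x_j, x_k]] of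
   degree d. *)
Definition label := (nat * nat * nat * nat)%type.

Definition hall1 m : seq label := [seq (1, i, 0, 0) | i <- iota 0 m].

Fixpoint hall2 m : seq label :=
  if m is m'.+1 then hall2 m' ++ [seq (2, i, m', 0) | i <- iota 0 m'] else [::].

Definition lower_row m : seq (nat * nat) := [seq (m, j) | j <- iota 0 m.+1].
Arguments lower_row : simpl never.

Fixpoint lower_pairs m : seq (nat * nat) :=
  if m is m'.+1 then lower_pairs m' ++ lower_row m' else [::].

Definition hall3_top m : seq label :=
  [seq (3, m, j, m) | j <- iota 0 m] ++ [seq (3, p.1, p.2, m) | p <- lower_pairs m]
  ++ [seq (3, m, t.1.1.2, t.1.2) | t <- hall2 m].

Fixpoint hall3 m : seq label := if m is m'.+1 then hall3 m' ++ hall3_top m' else [::].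

Definition hall m : seq label := hall1 m ++ hall2 m ++ hall3 m.

Lemma mem_hall1 m d i j k :
  ((d, i, j, k) \in hall1 m) = [&& d == 1, i < m, j == 0 & k == 0].
Proof.
apply/mapP/idP => [[a] | H]; first by rewrite mem_iota => Ha [-> -> -> ->]; lia.
exists i; first by rewrite mem_iota; lia.
by case/and4P: H => /eqP -> _ /eqP -> /eqP ->.
Qed.

Lemma mem_hall2 m d i j k :
  ((d, i, j, k) \in hall2 m) = [&& d == 2, i < j, j < m & k == 0].
Proof.
elim: m => [|m IH] /=; first by rewrite in_nil; lia.
rewrite mem_cat IH; apply/orP/idP => [[H | /mapP [a]] | H].
- by lia.
- by rewrite mem_iota => Ha [-> -> -> ->]; lia.
case: (ltnP j m) => Hj; first by left; lia.
right; apply/mapP; exists i; first by rewrite mem_iota; lia.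
have -> : j = m by lia.
by case/and4P: H => /eqP -> _ _ /eqP ->.
Qed.

Lemma mem_lower_pairs m i j : ((i, j) \in lower_pairs m) = (j <= i < m).
Proof.
elim: m => [|m IH] /=; first by rewrite in_nil; lia.
rewrite mem_cat IH /lower_row; apply/orP/idP => [[H | /mapP [a]] | H].
- by lia.
- by rewrite mem_iota => Ha [-> ->]; lia.
case: (ltnP i m) => Hi; first by left; lia.
right; apply/mapP; exists j; first by rewrite mem_iota; lia.
by have -> : i = m by lia.
Qed.

Lemma mem_hall3_top m d i j k :
  ((d, i, j, k) \in hall3_top m) =
  [&& d == 3, j < k, j <= i, i <= m, k <= m & (i == m) || (k == m)].
Proof.
rewrite /hall3_top !mem_cat; apply/idP/idP.
  case/or3P => [/mapP [a] | /mapP [[a b]] | /mapP [[[[d' a] b] c]]].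
  - by rewrite mem_iota => Ha [-> -> -> ->]; lia.
  - by rewrite mem_lower_pairs => Ha [-> -> -> ->]; lia.
  - by rewrite mem_hall2 => Ha [-> -> -> ->]; lia.
case/and5P => /eqP -> Hjk Hji Hi /andP [Hk /orP [/eqP Eim | /eqP Ekm]].
  case: (ltnP k m) => Hkm.
    by apply/or3P/Or33/mapP; exists (2, j, k, 0); rewrite ?mem_hall2 ?Eim //; lia.
  by apply/or3P/Or31/mapP; exists j; rewrite ?mem_iota ?Eim; [lia | congr (_, _, _, _); lia].
case: (ltnP i m) => Him.
  by apply/or3P/Or32/mapP; exists (i, j); rewrite ?mem_lower_pairs ?Ekm //; lia.
by apply/or3P/Or31/mapP; exists j; rewrite ?mem_iota ?Ekm; [lia | congr (_, _, _, _); lia].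
Qed.

Lemma mem_hall3 m d i j k :
  ((d, i, j, k) \in hall3 m) = [&& d == 3, j < k, j <= i, i < m & k < m].
Proof.
elim: m => [|m IH] /=; first by rewrite in_nil; lia.
by rewrite mem_cat IH mem_hall3_top; lia.
Qed.

Lemma mem_hall m d i j k : ((d, i, j, k) \in hall m) =
  [|| [&& d == 1, i < m, j == 0 & k == 0],
      [&& d == 2, i < j, j < m & k == 0] |
      [&& d == 3, j < k, j <= i, i < m & k < m]].
Proof. by rewrite /hall !mem_cat mem_hall1 mem_hall2 mem_hall3. Qed.

Lemma bin2_mul2 m : 'C(m, 2) * 2 = m * m.-1.
Proof. by elim: m => [|m IH] //; rewrite binS bin1 mulnDl IH; case: m {IH} => //= m; nia. Qed.

Lemma size_hall1 m : size (hall1 m) = m.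
Proof. by rewrite size_map size_iota. Qed.

Lemma size_hall2 m : size (hall2 m) = 'C(m, 2).
Proof. by elim: m => [|m IH] //=; rewrite size_cat IH size_map size_iota binS bin1. Qed.

Lemma size_lower_pairs m : size (lower_pairs m) = 'C(m.+1, 2).
Proof.
elim: m => [|m IH] //=.
by rewrite size_cat IH /lower_row size_map size_iota [in RHS]binS bin1.
Qed.

Lemma size_hall3 m : 3 * size (hall3 m) + m = m ^ 3.
Proof.
elim: m => [|m IH] //=.
rewrite size_cat /hall3_top !size_cat !size_map size_iota size_lower_pairs size_hall2.
by have := bin2_mul2 m; have /= := bin2_mul2 m.+1; nia.
Qed.

Lemma uniq_hall2 m : uniq (hall2 m).
Proof.
elim: m => [|m IH] //=; rewrite cat_uniq IH map_inj_uniq ?iota_uniq;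
  last by move=> a b [->].
by rewrite andbT /=; apply/hasPn => t /mapP [a _ ->]; rewrite mem_hall2; lia.
Qed.

Lemma uniq_lower_pairs m : uniq (lower_pairs m).
Proof.
elim: m => [|m IH] //=; rewrite cat_uniq IH /lower_row map_inj_uniq ?iota_uniq;
  last by move=> a b [->].
by rewrite andbT andTb; apply/hasPn => t /mapP [a _ ->]; rewrite mem_lower_pairs; lia.
Qed.

Lemma uniq_hall3_top m : uniq (hall3_top m).
Proof.
rewrite /hall3_top !cat_uniq map_inj_uniq ?iota_uniq; last by move=> a b [->].
rewrite map_inj_uniq ?uniq_lower_pairs; last by move=> [a b] [c e] /= [-> ->].
rewrite map_inj_in_uniq ?uniq_hall2; last first.
  move=> [[[d a] b] c] [[[d' a'] b'] c']; rewrite !mem_hall2 => H H' [-> ->].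
  by case/and4P: H => /eqP -> _ _ /eqP ->; case/and4P: H' => /eqP -> _ _ /eqP ->.
rewrite /= andbT; apply/andP; split.
  apply/hasPn => t; rewrite mem_cat => /orP [/mapP [[a b] + ->] | /mapP [[[[d a] b] c] + ->]].
    by rewrite mem_lower_pairs => Hm; apply/mapP => -[j _ [] /=]; lia.
  by rewrite mem_hall2 => Hm; apply/mapP => -[j _ [] /=]; lia.
apply/hasPn => t /mapP [[[[d a] b] c] + ->]; rewrite mem_hall2 => Hm.
by apply/mapP => -[[j j'] _ [] /=]; lia.
Qed.

Lemma uniq_hall3 m : uniq (hall3 m).
Proof.
elim: m => [|m IH] //=; rewrite cat_uniq IH uniq_hall3_top andbT /=.
by apply/hasPn => -[[[d i] j] k]; rewrite mem_hall3_top mem_hall3; lia.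
Qed.

Lemma uniq_hall1 m : uniq (hall1 m).
Proof. by rewrite map_inj_uniq ?iota_uniq // => a b [->]. Qed.

Lemma uniq_hall m : uniq (hall m).
Proof.
rewrite /hall !cat_uniq uniq_hall1 uniq_hall2 uniq_hall3 /= andbT.
apply/andP; split; apply/hasPn => -[[[d i] j] k];
  rewrite ?mem_cat ?mem_hall1 mem_hall2 mem_hall3; lia.
Qed.

Local Open Scope ring_scope.

Section LinearFacts.
Variables (K : fieldType) (U V : lmodType K) (f : U -> V) (f_lin : linear f).

Definition Linear_of : {linear U -> V} :=
  HB.pack f (GRing.isLinear.Build K U V *:%R f f_lin).

Lemma lin0 : f 0 = 0. Proof. exact: (raddf0 Linear_of). Qed.
Lemma linD u v : f (u + v) = f u + f v. Proof. exact: (raddfD Linear_of). Qed.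
Lemma linN u : f (- u) = - f u. Proof. exact: (raddfN Linear_of). Qed.
Lemma linZ a u : f (a *: u) = a *: f u. Proof. by rewrite -[a *: u]addr0 f_lin lin0 addr0. Qed.
Lemma lin_sum I (r : seq I) (P : pred I) (F : I -> U) :
  f (\sum_(i <- r | P i) F i) = \sum_(i <- r | P i) f (F i).
Proof. exact: (raddf_sum Linear_of). Qed.
End LinearFacts.

Lemma linfunE (K : fieldType) (aT rT : vectType K) (f : aT -> rT) (f_lin : linear f) :
  linfun f =1 f.
Proof. exact: (lfunE (Linear_of f_lin)). Qed.

Section LieFacts.
Variables (K : fieldType) (M : lmodType K) (br : M -> M -> M).
Hypothesis lieM : is_lie br.

Lemma br_linl z : linear (br^~ z). Proof. by case: lieM => H _ _ _ a u v; apply: H. Qed.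
Lemma br_linr z : linear (br z). Proof. by case: lieM => _ H _ _ a u v; apply: H. Qed.
Lemma br_alt u : br u u = 0. Proof. by case: lieM. Qed.
Lemma br_jacobi u v w : br u (br v w) + br v (br w u) + br w (br u v) = 0.
Proof. by case: lieM. Qed.

Lemma brDl u v z : br (u + v) z = br u z + br v z. Proof. exact: (linD (br_linl z)). Qed.
Lemma brNr u z : br z (- u) = - br z u. Proof. exact: (linN (br_linr z)). Qed.

Lemma brC u v : br u v = - br v u.
Proof.
have := br_alt (u + v); rewrite brDl !(linD (br_linr _)) !br_alt add0r addr0 => /eqP.
by rewrite addr_eq0 => /eqP.
Qed.

Lemma br_jacobiD u v w : br u (br v w) = br v (br u w) - br w (br u v).
Proof.
have /eqP := br_jacobi u v w; rewrite (brC w u) brNr -addrA addr_eq0 => /eqP ->.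
by rewrite opprD opprK.
Qed.

Hypothesis nilM : nilp3 br.

Lemma br_brbr a b c d : br (br a b) (br c d) = 0.
Proof. by have := br_jacobi c d (br a b); rewrite [br (br a b) c]brC brNr !nilM oppr0 !add0r. Qed.

Lemma br_br3 a b c y : br (br a (br b c)) y = 0.
Proof. by rewrite brC nilM oppr0. Qed.
End LieFacts.

(* Strictly upper triangular 4x4 matrices, in the coordinates (c12, c23, c34, c13, c24, c14),
   with the matrix commutator as bracket. *)
Section N4.
Variable K : fieldType.
Definition n4 := (K^o * K^o * K^o * K^o * K^o * K^o)%type.
Definition c12 (v : n4) : K := v.1.1.1.1.1.
Definition c23 (v : n4) : K := v.1.1.1.1.2.
Definition c34 (v : n4) : K := v.1.1.1.2.
Definition c13 (v : n4) : K := v.1.1.2.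
Definition c24 (v : n4) : K := v.1.2.
Definition c14 (v : n4) : K := v.2.
Definition n4_br (u v : n4) : n4 :=
  (0, 0, 0, c12 u * c23 v - c23 u * c12 v, c23 u * c34 v - c34 u * c23 v,
   c12 u * c24 v - c24 u * c12 v + c13 u * c34 v - c34 u * c13 v).

Lemma scale_pair (A B : lmodType K) (a : K) (u : A) (v : B) :
  a *: ((u, v) : (A * B)%type) = (a *: u, a *: v).
Proof. by []. Qed.
Lemma add_pair (A B : lmodType K) (u u' : A) (v v' : B) :
  ((u, v) : (A * B)%type) + (u', v') = (u + u', v + v').
Proof. by []. Qed.
Lemma scaleKo (a x : K) : a *: (x : K^o) = a * x. Proof. by []. Qed.

Lemma n4_lie : is_lie n4_br.
Proof.
split.
- move=> a [[[[[? ?] ?] ?] ?] ?] [[[[[? ?] ?] ?] ?] ?] [[[[[? ?] ?] ?] ?] ?].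
  rewrite /n4_br /c12 /c23 /c34 /c13 /c24 /c14 !scale_pair !add_pair /= !scaleKo.
  by congr (_, _, _, _, _, _); ring.
- move=> a [[[[[? ?] ?] ?] ?] ?] [[[[[? ?] ?] ?] ?] ?] [[[[[? ?] ?] ?] ?] ?].
  rewrite /n4_br /c12 /c23 /c34 /c13 /c24 /c14 !scale_pair !add_pair /= !scaleKo.
  by congr (_, _, _, _, _, _); ring.
- move=> [[[[[? ?] ?] ?] ?] ?].
  by rewrite /n4_br /c12 /c23 /c34 /c13 /c24 /c14 /=; congr (_, _, _, _, _, _); ring.
- move=> [[[[[? ?] ?] ?] ?] ?] [[[[[? ?] ?] ?] ?] ?] [[[[[? ?] ?] ?] ?] ?].
  rewrite /n4_br /c12 /c23 /c34 /c13 /c24 /c14 !add_pair /=.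
  by congr (_, _, _, _, _, _); ring.
Qed.

Lemma n4_nilp3 : nilp3 n4_br.
Proof.
move=> [[[[[? ?] ?] ?] ?] ?] [[[[[? ?] ?] ?] ?] ?] [[[[[? ?] ?] ?] ?] ?] [[[[[? ?] ?] ?] ?] ?].
by rewrite /n4_br /c12 /c23 /c34 /c13 /c24 /c14 /=; congr (_, _, _, _, _, _); ring.
Qed.

Definition n4_gen (a b c : nat -> K) (n : nat) : n4 := (a n, b n, c n, 0, 0, 0).

Lemma c12_gen a b c n : c12 (n4_gen a b c n) = a n. Proof. by []. Qed.
Lemma c23_gen a b c n : c23 (n4_gen a b c n) = b n. Proof. by []. Qed.
Lemma c34_gen a b c n : c34 (n4_gen a b c n) = c n. Proof. by []. Qed.
Lemma c13_gen a b c n : c13 (n4_gen a b c n) = 0. Proof. by []. Qed.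
Lemma c24_gen a b c n : c24 (n4_gen a b c n) = 0. Proof. by []. Qed.
Lemma c14_gen a b c n : c14 (n4_gen a b c n) = 0. Proof. by []. Qed.
Lemma c12_br u v : c12 (n4_br u v) = 0. Proof. by []. Qed.
Lemma c23_br u v : c23 (n4_br u v) = 0. Proof. by []. Qed.
Lemma c34_br u v : c34 (n4_br u v) = 0. Proof. by []. Qed.
Lemma c13_br u v : c13 (n4_br u v) = c12 u * c23 v - c23 u * c12 v. Proof. by []. Qed.
Lemma c24_br u v : c24 (n4_br u v) = c23 u * c34 v - c34 u * c23 v. Proof. by []. Qed.
Lemma c14_br u v :
  c14 (n4_br u v) = c12 u * c24 v - c24 u * c12 v + c13 u * c34 v - c34 u * c13 v.
Proof. by []. Qed.
Definition n4E := (c12_gen, c23_gen, c34_gen, c13_gen, c24_gen, c14_gen,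
                   c12_br, c23_br, c34_br, c13_br, c24_br, c14_br).
End N4.

Definition hall_eval (K : fieldType) (M : lmodType K) (brM : M -> M -> M) (Y : nat -> M)
    (t : label) : M :=
  let: (d, i, j, k) := t in
  if d == 1%N then Y i else if d == 2%N then brM (Y i) (Y j)
  else if d == 3%N then brM (Y i) (brM (Y j) (Y k)) else 0.
Arguments hall_eval : simpl never.

Lemma hall_eval_hom (K : fieldType) (M M' : lmodType K) (brM : M -> M -> M)
    (brM' : M' -> M' -> M') (f : M -> M') (Y : nat -> M) t :
  lie_hom brM brM' f -> f (hall_eval brM Y t) = hall_eval brM' (f \o Y) t.
Proof.
case=> f_lin f_br; case: t => [[[d i] j] k]; rewrite /hall_eval /=.
case: ifP => _ //; case: ifP => _; first by rewrite f_br.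
by case: ifP => _; [rewrite !f_br | exact: (lin0 f_lin)].
Qed.

Lemma eq_hall_eval (K : fieldType) (M : lmodType K) (brM : M -> M -> M) (Y Y' : nat -> M)
    m s :
  s \in hall m -> {in gtn m, Y =1 Y'} -> hall_eval brM Y s = hall_eval brM Y' s.
Proof.
case: s => [[[d i] j] k]; rewrite mem_hall => Hs eqY; rewrite /hall_eval.
case: ifP => [/eqP Hd | _]; first by apply: eqY; rewrite inE; lia.
case: ifP => [/eqP Hd | _]; first by rewrite !eqY // inE; lia.
by case: ifP => [/eqP Hd | _] //; rewrite !eqY // inE; lia.
Qed.

Section DualFamily.
Variables (K : fieldType) (L : vectType K).

Lemma span_lin (M : vectType K) (f : L -> M) (f_lin : linear f) (S : {vspace M})
    (Y : seq L) :
  {subset [seq f y | y <- Y] <= S} -> forall v, v \in <<Y>>%VS -> f v \in S.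
Proof.
move=> fYS v; rewrite -[Y]in_tupleE => /coord_span ->.
rewrite (lin_sum f_lin); apply: memv_suml => i _; rewrite (linZ f_lin).
by apply/memvZ/fYS/map_f; exact: (mem_nth 0 (ltn_ord i)).
Qed.

Lemma span_lin_eq0 (M : vectType K) (f : L -> M) (f_lin : linear f) (Y : seq L) :
  {in Y, forall y, f y = 0} -> forall v, v \in <<Y>>%VS -> f v = 0.
Proof.
move=> fY0 v Yv; apply/eqP; rewrite -memv0; apply: (span_lin f_lin) Yv.
by move=> _ /mapP [y /fY0 -> ->]; exact: mem0v.
Qed.

Lemma free_of_dual (Y : seq L) (f : nat -> L -> K^o) (f_lin : forall p, linear (f p)) :
  (forall p q, (p < size Y)%N -> (q < size Y)%N -> f p Y`_q = (p == q)%:R) ->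
  free Y /\ (forall v, v \in <<Y>>%VS -> (forall p, (p < size Y)%N -> f p v = 0) -> v = 0).
Proof.
move=> dualY; have coef : forall (k : 'I_(size Y) -> K) (p : 'I_(size Y)),
    f p (\sum_(i < size Y) k i *: Y`_i) = k p.
  move=> k p; rewrite (lin_sum (f_lin p)) (bigD1 p) //= big1 => [|i ne_ip].
    by rewrite (linZ (f_lin p)) dualY // eqxx /GRing.scale /= mulr1 addr0.
  rewrite (linZ (f_lin p)) dualY //; case: eqP => [/val_inj Epi | _].
    by rewrite Epi eqxx in ne_ip.
  by rewrite /GRing.scale /= mulr0.
split.
  rewrite -[Y]in_tupleE; apply/freeP => k; rewrite in_tupleE => sum0 i.
  by rewrite -(coef k i) sum0 (lin0 (f_lin i)).
move=> v; rewrite -[Y]in_tupleE => /coord_span -> fv0.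
apply: big1 => i _; have := coef (fun j => coord (in_tuple Y) j v) i.
by rewrite fv0 // => <-; rewrite scale0r.
Qed.
End DualFamily.

Section TestHomomorphisms.
Variables (K : fieldType) (g : nat).

Definition kron (a n : nat) : K := (n == a)%:R.

Definition third (p q : nat) : nat :=
  if (p != 0%N) && (q != 0%N) then 0%N
  else if (p != 1%N) && (q != 1%N) then 1%N else 2%N.

Lemma third_spec p q : (p < q)%N -> [&& third p q != p, third p q != q & third p q < 3]%N.
Proof.
rewrite /third; case: (p =P 0%N); case: (q =P 0%N); case: (p =P 1%N);
  case: (q =P 1%N) => /= *; lia.
Qed.

(* For each Hall label t, the generators x_(slot12 t), x_(slot23 t), x_(slot34 t) are sent
   to E12, E23, E34 and all other generators to 0; under this homomorphism to n4 the entry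
   test_coord t vanishes on every Hall element except t, where it equals test_weight t. *)
Definition slot12 (t : label) : nat := let: (d, p, q, r) := t in
  if d == 1%N then p else if d == 2%N then p else
  if p == q then p else if p == r then r else if (p < r)%N then p else q.
Definition slot23 (t : label) : nat := let: (d, p, q, r) := t in
  if d == 1%N then (if p == 0%N then 1%N else 0%N) else if d == 2%N then q else
  if p == q then r else if p == r then q else r.
Definition slot34 (t : label) : nat := let: (d, p, q, r) := t in
  if d == 1%N then g else if d == 2%N then third p q else
  if p == q then p else if p == r then r else if (p < r)%N then q else p.

Definition test_gen (t : label) : nat -> n4 K :=
  n4_gen (kron (slot12 t)) (kron (slot23 t)) (kron (slot34 t)).
Definition test_coord (t : label) : n4 K -> K := let: (d, p, q, r) := t in
  if d == 1%N then @c12 K else if d == 2%N then @c13 K else @c14 K.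
Definition test_weight (t : label) : K := let: (d, p, q, r) := t in
  if d == 3%N then (if p == q then - 2%:R else if p == r then 2%:R else -1) else 1.

Lemma test_coord_lin t : linear (test_coord t : n4 K -> K^o).
Proof. by case: t => [[[d p] q] r] a u v; rewrite /test_coord; case: ifP => _; [|case: ifP]. Qed.

Lemma test_weight_neq0 t : (2%:R : K) != 0 -> test_weight t != 0.
Proof.
case: t => [[[d p] q] r] two_neq0; rewrite /test_weight.
case: ifP => _; last exact: oner_neq0.
case: ifP => _; first by rewrite oppr_eq0.
by case: ifP => _ //; rewrite oppr_eq0 oner_neq0.
Qed.

Ltac split_nat_tests :=
  repeat (match goal with
  | |- context [?a == ?b] => case: (a =P b) => ?
  | |- context [(?a < ?b)%N] => case: (ltnP a b) => ?
  end; try subst; try (exfalso; lia));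
  rewrite /= ?(mulr0, mul0r, subr0, addr0, sub0r, oppr0, mulr1, mul1r).

(* The c14 entry of [Y_i, [Y_j, Y_k]] for Y = n4_gen a b c. *)
Definition triple14 (a b c : nat -> K) (i j k : nat) : K :=
  a i * (b j * c k - c j * b k) - c i * (a j * b k - b j * a k).

Section Triple14.
Variables i j k : nat.
Hypotheses (lt_jk : (j < k)%N) (le_ji : (j <= i)%N).

Lemma triple14_left p r : (p < r)%N ->
  triple14 (kron p) (kron r) (kron p) i j k = - 2%:R * ((i == p) && (j == p) && (k == r))%:R.
Proof. by move=> *; rewrite /triple14 /kron; split_nat_tests; ring. Qed.

Lemma triple14_right q r : (q < r)%N ->
  triple14 (kron r) (kron q) (kron r) i j k = 2%:R * ((i == r) && (j == q) && (k == r))%:R.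
Proof. by move=> *; rewrite /triple14 /kron; split_nat_tests; ring. Qed.

Lemma triple14_mid p q r : (q < p < r)%N ->
  triple14 (kron p) (kron r) (kron q) i j k = - ((i == p) && (j == q) && (k == r))%:R.
Proof. by move=> *; rewrite /triple14 /kron; split_nat_tests; ring. Qed.

Lemma triple14_top p q r : (q < r < p)%N ->
  triple14 (kron q) (kron r) (kron p) i j k = - ((i == p) && (j == q) && (k == r))%:R.
Proof. by move=> *; rewrite /triple14 /kron; split_nat_tests; ring. Qed.
End Triple14.

Lemma test_coord_hall s t : s \in hall g -> t \in hall g ->
  test_coord t (hall_eval (@n4_br K) (test_gen t) s) = (s == t)%:R * test_weight t.
Proof.
case: s => [[[d i] j] k]; case: t => [[[d' p] q] r]; rewrite !mem_hall !xpair_eqE.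
case/or3P => [/and4P [/eqP -> Hi /eqP -> /eqP ->] | /and4P [/eqP -> Hij Hj /eqP ->] |
  /and5P [/eqP -> Hjk Hji Hi Hk]];
case/or3P => [/and4P [/eqP -> Hp /eqP -> /eqP ->] | /and4P [/eqP -> Hpq Hq /eqP ->] |
  /and5P [/eqP -> Hqr Hqp Hp Hr]];
rewrite /test_coord /test_weight /test_gen /hall_eval /= ?n4E /kron /= ?mulr1 ?mul0r //.
- by split_nat_tests.
- by split_nat_tests.
- by split_nat_tests.
- by rewrite !mulr0 subrr.
have -> : forall a b c : nat,
    (i == a)%:R * ((j == b)%:R * (k == c)%:R - (j == c)%:R * (k == b)%:R) - 0 + 0 -
    (i == c)%:R * ((j == a)%:R * (k == b)%:R - (j == b)%:R * (k == a)%:R) =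
    triple14 (kron a) (kron b) (kron c) i j k :> K.
  by move=> a b c; rewrite /triple14 /kron subr0 addr0.
case: (p =P q) => [Epq | ne_pq].
  by rewrite -Epq (@triple14_left i j k Hjk Hji p r); [rewrite mulrC | lia..].
case: (p =P r) => [Epr | ne_pr].
  by rewrite -Epr (@triple14_right i j k Hjk Hji q p); [rewrite mulrC | lia..].
case: (ltnP p r) => [lt_pr | le_rp].
  by rewrite (@triple14_mid i j k Hjk Hji p q r); [rewrite mulrN1 | lia..].
by rewrite (@triple14_top i j k Hjk Hji p q r); [rewrite mulrN1 | lia..].
Qed.
End TestHomomorphisms.

Section CenterStabilizer.
Variables (K : fieldType) (L : vectType K) (br : L -> L -> L).
Hypothesis lieL : is_lie br.

Lemma mem_lie_center v : v \in lie_center br <-> forall z, br z v = 0.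
Proof.
have ad_lin : linear (fun y : L => (linfun (br^~ y) : 'Hom(L, L))).
  move=> a u w; apply/lfunP => z.
  by rewrite add_lfunE scale_lfunE !(linfunE (br_linl lieL _)) (br_linr lieL).
rewrite /lie_center memv_ker (linfunE ad_lin); split=> [/eqP adv0 z | adv0].
  by rewrite -(linfunE (br_linl lieL v)) adv0 zero_lfunE.
by apply/eqP/lfunP => z; rewrite zero_lfunE (linfunE (br_linl lieL v)).
Qed.

Variable l : 'Hom(L, K^o).

Lemma l_br_linl v : linear (fun z => l (br z v)).
Proof. by move=> a u w; rewrite (br_linl lieL) linearP. Qed.

Lemma mem_stab v : v \in stab br l <-> forall z, l (br z v) = 0.
Proof.
have coad_lin : linear (fun y : L => (linfun (fun z => l (br z y)) : 'Hom(L, K^o))).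
  move=> a u w; apply/lfunP => z.
  by rewrite add_lfunE scale_lfunE !(linfunE (l_br_linl _)) (br_linr lieL) linearP.
rewrite /stab memv_ker (linfunE coad_lin); split=> [/eqP coadv0 z | coadv0].
  by rewrite -(linfunE (l_br_linl v)) coadv0 zero_lfunE.
by apply/eqP/lfunP => z; rewrite zero_lfunE (linfunE (l_br_linl v)).
Qed.
End CenterStabilizer.

Section FreeNilp3.
Variables (K : fieldType) (L : vectType K) (br : L -> L -> L) (gp : nat).
Variable x : 'I_gp.+1 -> L.
Local Notation g := gp.+1.
Hypothesis freeL : free_nilp3 br x.

Let lieL : is_lie br. Proof. by case: freeL. Qed.
Let nilL : nilp3 br. Proof. by case: freeL. Qed.

Lemma free_nilp3_lift (M : lmodType K) (brM : M -> M -> M) (m : 'I_g -> M) :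
  is_lie brM -> nilp3 brM ->
  exists f : L -> M, lie_hom br brM f /\ forall i, f (x i) = m i.
Proof. by case: freeL => _ _ lift lieM nilM; case: (lift M brM m lieM nilM). Qed.

Section GeneratedSubalgebra.
Variable S : {vspace L}.
Hypotheses (brS : forall u v, u \in S -> v \in S -> br u v \in S) (xS : forall i, x i \in S).

Let br_sub (u v : subvs_of S) : subvs_of S := vsproj S (br (vsval u) (vsval v)).
Let br_subE u v : vsval (br_sub u v) = br (vsval u) (vsval v).
Proof. by rewrite vsprojK // brS // subvsP. Qed.
Let vsval_inj := can_inj (@vsvalK _ _ S).
Let vsval_lin := @vsval_is_linear _ _ S.

Let br_sub_lie : is_lie br_sub.
Proof.
split=> [a u v w | a u v w | u | u v w]; apply: vsval_inj.
- by rewrite br_subE !vsval_lin !br_subE; exact: (br_linl lieL).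
- by rewrite br_subE !vsval_lin !br_subE; exact: (br_linr lieL).
- by rewrite br_subE (br_alt lieL) (lin0 vsval_lin).
- by rewrite !(linD vsval_lin) !br_subE (lin0 vsval_lin); exact: (br_jacobi lieL).
Qed.

Let br_sub_nilp3 : nilp3 br_sub.
Proof. by move=> a b c d; apply: vsval_inj; rewrite !br_subE nilL (lin0 vsval_lin). Qed.

(* The retraction L -> S given by freeness, followed by the inclusion, fixes the generators,
   hence is the identity by uniqueness. *)
Lemma free_nilp3_subalg_full : S = fullv.
Proof.
apply/eqP; rewrite eqEsubv subvf; apply/subvP => v _.
have [f [[f_lin f_br] fx]] := free_nilp3_lift (fun i => vsproj S (x i)) br_sub_lie br_sub_nilp3.
have id_hom : lie_hom br br id by [].
have incl_hom : lie_hom br br (vsval \o f).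
  by split=> [a u w | u w] /=; rewrite ?f_lin ?vsval_lin // f_br br_subE.
have incl_fx i : (vsval \o f) (x i) = x i by rewrite /= fx vsprojK.
case: freeL => _ _ /(_ _ br x lieL nilL) [_ /(_ _ _ incl_hom incl_fx id_hom (fun=> erefl))].
by move/(_ v) => <-; exact: subvsP.
Qed.
End GeneratedSubalgebra.

(* For n >= g, X n is the junk value x 0. *)
Definition X (n : nat) : L := x (inord n).
Definition hall_elt : label -> L := hall_eval br X.
Definition hall_basis : seq L := map hall_elt (hall g).

Lemma hall_elt1 i : hall_elt (1, i, 0, 0)%N = X i. Proof. by []. Qed.
Lemma hall_elt2 i j : hall_elt (2, i, j, 0)%N = br (X i) (X j). Proof. by []. Qed.
Lemma hall_elt3 i j k : hall_elt (3, i, j, k)%N = br (X i) (br (X j) (X k)).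
Proof. by []. Qed.

Lemma X_ord (i : 'I_g) : X i = x i.
Proof. by rewrite /X inord_val. Qed.

Lemma hall_elt_in s : s \in hall g -> hall_elt s \in <<hall_basis>>%VS.
Proof. by move=> hs; apply/memv_span/map_f. Qed.

Lemma br_X_X_in i j : (i < g)%N -> (j < g)%N -> br (X i) (X j) \in <<hall_basis>>%VS.
Proof.
move=> lt_ig lt_jg; case: (ltngtP i j) => [lt_ij | lt_ji | ->].
- by rewrite -hall_elt2 hall_elt_in // mem_hall; lia.
- by rewrite (brC lieL) memvN -hall_elt2 hall_elt_in // mem_hall; lia.
- by rewrite (br_alt lieL) mem0v.
Qed.

Lemma br_X_br_X_X_in i a b : (i < g)%N -> (a < b)%N -> (b < g)%N ->
  br (X i) (br (X a) (X b)) \in <<hall_basis>>%VS.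
Proof.
move=> lt_ig lt_ab lt_bg; case: (leqP a i) => [le_ai | lt_ia].
  by rewrite -hall_elt3 hall_elt_in // mem_hall; lia.
by rewrite (br_jacobiD lieL); apply: memvB; rewrite -hall_elt3 hall_elt_in // mem_hall; lia.
Qed.

Lemma br_hall_elt_in s t : s \in hall g -> t \in hall g ->
  br (hall_elt s) (hall_elt t) \in <<hall_basis>>%VS.
Proof.
case: s => [[[d i] j] k]; case: t => [[[d' p] q] r]; rewrite !mem_hall.
case/or3P => [/and4P [/eqP -> Hi /eqP -> /eqP ->] | /and4P [/eqP -> Hij Hj /eqP ->] |
  /and5P [/eqP -> Hjk Hji Hi Hk]];
case/or3P => [/and4P [/eqP -> Hp /eqP -> /eqP ->] | /and4P [/eqP -> Hpq Hq /eqP ->] |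
  /and5P [/eqP -> Hqr Hqp Hp Hr]];
rewrite ?hall_elt1 ?hall_elt2 ?hall_elt3
  ?nilL ?(br_brbr lieL nilL) ?(br_br3 lieL nilL) ?mem0v //.
- exact: br_X_X_in.
- exact: br_X_br_X_X_in.
- by rewrite (brC lieL) memvN br_X_br_X_X_in.
Qed.

Lemma span_hall_basis : <<hall_basis>>%VS = fullv.
Proof.
apply: free_nilp3_subalg_full => [u v Hu Hv | i]; last first.
  by rewrite -X_ord -hall_elt1 hall_elt_in // mem_hall ltn_ord; lia.
apply: (span_lin (br_linl lieL v)) Hu => _ /mapP [_ /mapP [s Hs ->] ->].
apply: (span_lin (br_linr lieL _)) Hv => _ /mapP [_ /mapP [t Ht ->] ->].
exact: br_hall_elt_in.
Qed.

Let test_hom_spec t := constructive_indefinite_description _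
  (free_nilp3_lift (fun i : 'I_g => test_gen K g t i) (@n4_lie K) (@n4_nilp3 K)).
Definition test_hom t : L -> n4 K := proj1_sig (test_hom_spec t).

Lemma test_hom_lie t : lie_hom br (@n4_br K) (test_hom t).
Proof. exact: (proj1 (proj2_sig (test_hom_spec t))). Qed.

Lemma test_hom_x t i : test_hom t (x i) = test_gen K g t i.
Proof. exact: (proj2 (proj2_sig (test_hom_spec t))). Qed.

Lemma test_hom_X t n : (n < g)%N -> test_hom t (X n) = test_gen K g t n.
Proof. by move=> lt_ng; rewrite /X test_hom_x inordK. Qed.

Lemma test_hom_hall t s : s \in hall g ->
  test_hom t (hall_elt s) = hall_eval (@n4_br K) (test_gen K g t) s.
Proof.
move=> Hs; rewrite /hall_elt (hall_eval_hom _ _ (test_hom_lie t)).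
by apply: (eq_hall_eval _ Hs) => n lt_ng; exact: test_hom_X.
Qed.

Definition hall_coord t (v : L) : K^o := (test_weight K t)^-1 * test_coord t (test_hom t v).

Lemma hall_coord_lin t : linear (hall_coord t).
Proof.
move=> a u v; rewrite /hall_coord (proj1 (test_hom_lie t)) (test_coord_lin t).
by rewrite /GRing.scale /= mulrDr mulrCA.
Qed.

Lemma test_hom_central t v : (forall z, br z v = 0) ->
  forall n, (n < g)%N -> n4_br (test_gen K g t n) (test_hom t v) = 0.
Proof.
move=> central_v n lt_ng; have [hom_lin hom_br] := test_hom_lie t.
by rewrite -test_hom_X // -hom_br central_v (lin0 hom_lin).
Qed.

Definition u (m : nat) : L :=
  if m == 0%N then br (X 0) (X 1) else if m == 1%N then br (X 1) (X 2)
  else br (X 0) (X m).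

Lemma u_br m : exists a b, u m = br a b.
Proof. by rewrite /u; case: ifP => _; [|case: ifP => _]; eexists; eexists. Qed.

Section IndexForm.
Variable l : 'Hom(L, K^o).
Hypothesis l_XX : forall a b, (a < g)%N -> (b < g)%N -> l (br (X a) (X b)) = 0.
Hypothesis l_Xu : forall a m, (a < g)%N -> (m < g)%N -> l (br (X a) (u m)) = (a == m)%:R.

Definition X_u_family : seq L := map X (iota 0 g) ++ map u (iota 0 g).

Lemma size_X_u_family : size X_u_family = (2 * g)%N.
Proof. by rewrite size_cat !size_map size_iota; lia. Qed.

Lemma nth_X_u_family q : (q < 2 * g)%N ->
  X_u_family`_q = if (q < g)%N then X q else u (q - g).
Proof.
move=> lt_q; rewrite nth_cat size_map size_iota; case: ifP => lt_qg.
  by rewrite (nth_map 0%N) ?size_iota // nth_iota.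
by rewrite (nth_map 0%N) ?size_iota ?nth_iota ?add0n //; lia.
Qed.

(* These forms vanish on h(l). *)
Definition X_u_dual (p : nat) (v : L) : K^o :=
  if (p < g)%N then - l (br (u p) v) else l (br (X (p - g)) v).

Lemma X_u_dual_lin p : linear (X_u_dual p).
Proof.
move=> a v w; rewrite /X_u_dual; case: ifP => _; rewrite (br_linr lieL) linearP //.
by rewrite opprD /GRing.scale /= mulrN.
Qed.

Lemma X_u_dualE p q : (p < size X_u_family)%N -> (q < size X_u_family)%N ->
  X_u_dual p X_u_family`_q = (p == q)%:R.
Proof.
rewrite size_X_u_family => lt_p lt_q; rewrite nth_X_u_family // /X_u_dual.
case: (ltnP p g) => lt_pg; case: (ltnP q g) => lt_qg /=.
- by rewrite eq_sym (brC lieL) linearN opprK; apply: l_Xu.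
- have [a [b ->]] := u_br p; have [c [d ->]] := u_br (q - g).
  rewrite (br_brbr lieL nilL) linear0 oppr0.
  by have -> : (p == q) = false by apply/eqP; lia.
- by rewrite l_XX //; [have -> : (p == q) = false by apply/eqP; lia | lia].
- by rewrite l_Xu; [congr (_%:R); apply/eqP/eqP; lia | lia | lia].
Qed.

Lemma dim_stab_index_form : (\dim (stab br l) + 2 * g <= \dim (fullv : {vspace L}))%N.
Proof.
have [free_Xu sep_Xu] := free_of_dual X_u_dual_lin X_u_dualE.
have cap0 : (stab br l :&: <<X_u_family>> = 0)%VS.
  apply/eqP; rewrite -subv0; apply/subvP => v /memv_capP [/(mem_stab lieL) stab_v v_Xu].
  rewrite memv0; apply/eqP/sep_Xu => // p _; rewrite /X_u_dual.
  by case: ifP => _; rewrite stab_v ?oppr0.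
have := dimvS (subvf (stab br l + <<X_u_family>>)%VS).
by rewrite dimv_disjoint_sum // (eqP free_Xu) size_X_u_family.
Qed.
End IndexForm.

Hypothesis two_neq0 : (2%:R : K) != 0.

Lemma hall_coord_hall s t : s \in hall g -> t \in hall g ->
  hall_coord t (hall_elt s) = (s == t)%:R.
Proof.
move=> Hs Ht; rewrite /hall_coord test_hom_hall // test_coord_hall //.
by rewrite mulrC -mulrA mulfV ?mulr1 ?test_weight_neq0.
Qed.

Lemma free_hall_sub (ls : seq label) : uniq ls -> {subset ls <= hall g} ->
  free (map hall_elt ls) /\ (forall v, v \in <<map hall_elt ls>>%VS ->
    {in ls, forall t, hall_coord t v = 0} -> v = 0).
Proof.
move=> uniq_ls sub_ls; pose f p := hall_coord (nth (0, 0, 0, 0)%N ls p).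
have dual_ls p q : (p < size (map hall_elt ls))%N -> (q < size (map hall_elt ls))%N ->
    f p (map hall_elt ls)`_q = (p == q)%:R.
  rewrite size_map => lt_p lt_q; rewrite (nth_map (0, 0, 0, 0)%N) // /f.
  by rewrite hall_coord_hall ?sub_ls ?mem_nth // (nth_uniq _ lt_q lt_p uniq_ls) eq_sym.
have [free_ls sep_ls] := free_of_dual (fun p => hall_coord_lin _) dual_ls.
split=> // v Hv coord0; apply: sep_ls => // p; rewrite size_map => lt_p.
exact/coord0/mem_nth.
Qed.

Lemma free_hall_basis : free hall_basis.
Proof. by have [] := free_hall_sub (uniq_hall g) (fun t (h : t \in hall g) => h). Qed.

Lemma dim_free_nilp3 : \dim (fullv : {vspace L}) = (g + 'C(g, 2) + size (hall3 g))%N.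
Proof.
rewrite -span_hall_basis (eqP free_hall_basis) size_map /hall.
by rewrite (size_cat (hall1 g)) (size_cat (hall2 g)) size_hall1 size_hall2 addnA.
Qed.

Definition hall_ge2 : {vspace L} := <<map hall_elt (hall2 g ++ hall3 g)>>%VS.

Lemma hall_ge2_br s : s \in hall2 g ++ hall3 g -> exists a b, hall_elt s = br a b.
Proof.
case: s => [[[d i] j] k]; rewrite mem_cat mem_hall2 mem_hall3.
case/orP => [/and4P [/eqP -> _ _ /eqP ->] | /and5P [/eqP -> _ _ _ _]].
  by exists (X i), (X j).
by exists (X i), (br (X j) (X k)).
Qed.

Lemma br_hall_ge2 w v : w \in hall_ge2 -> v \in hall_ge2 -> br w v = 0.
Proof.
move=> Hw Hv; apply: (span_lin_eq0 (br_linl lieL v)) Hw => _ /mapP [s Hs ->].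
apply: (span_lin_eq0 (br_linr lieL _)) Hv => _ /mapP [t Ht ->].
have [a [b ->]] := hall_ge2_br Hs; have [c [d ->]] := hall_ge2_br Ht.
exact: (br_brbr lieL nilL).
Qed.

Lemma hall_basis_cat1 : hall_basis = map hall_elt (hall1 g) ++ map hall_elt (hall2 g ++ hall3 g).
Proof. by rewrite /hall_basis /hall map_cat. Qed.

Lemma dim_hall_ge2 : \dim hall_ge2 = ('C(g, 2) + size (hall3 g))%N.
Proof.
have free23 : free (map hall_elt (hall2 g ++ hall3 g)).
  by have := free_hall_basis; rewrite hall_basis_cat1 => /catr_free.
by rewrite /hall_ge2 (eqP free23) size_map size_cat size_hall2.
Qed.

(* hall_ge2 is abelian, so an element of it lies in h(l) as soon as it is killed by the g
   linear conditions l([x_i, _]) = 0. *)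
Lemma dim_stab_ge l : (\dim (fullv : {vspace L}) <= \dim (stab br l) + 2 * g)%N.
Proof.
have T_lin : linear (fun y : L => (\row_(i < g) l (br (x i) y) : 'rV[K]_g)).
  by move=> a u v; apply/rowP => i; rewrite !mxE (br_linr lieL) linearP.
pose T : 'Hom(L, 'rV[K]_g) := linfun (fun y : L => \row_(i < g) l (br (x i) y)).
have dimT : (\dim (T @: hall_ge2) <= g)%N.
  by have := dimvS (subvf (T @: hall_ge2)); rewrite dimvf /dim /= mul1n.
have sub_stab : (hall_ge2 :&: lker T <= stab br l)%VS.
  apply/subvP => v /memv_capP [v_ge2 v_ker]; apply/(mem_stab lieL) => z.
  have : z \in (<<map hall_elt (hall1 g)>> + hall_ge2)%VS.
    by rewrite -span_cat -hall_basis_cat1 span_hall_basis memvf.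
  case/memv_addP => z1 z1_1 [z2 z2_ge2 ->]; rewrite (brDl lieL) (br_hall_ge2 z2_ge2 v_ge2) addr0.
  apply: (span_lin_eq0 (l_br_linl lieL l v)) z1_1 => _ /mapP [[[[d i] j] k] + ->].
  rewrite mem_hall1 => /and4P [/eqP -> lt_ig /eqP -> /eqP ->]; rewrite hall_elt1.
  move: v_ker; rewrite memv_ker (linfunE T_lin) => /eqP /rowP /(_ (inord i)).
  by rewrite !mxE /X.
have := limg_ker_dim T hall_ge2; have := dimvS sub_stab.
by rewrite dim_free_nilp3 dim_hall_ge2; lia.
Qed.

Hypothesis g_ge3 : (3 <= g)%N.

Lemma hall_coord_central t v : t \in hall1 g ++ hall2 g -> (forall z, br z v = 0) ->
  hall_coord t v = 0.
Proof.
(* If [x_s, v] = 0 for the generator x_s sent to E23 (degree 1) or E34 (degree 2), the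
   c12 (resp. c13) entry of the image of v vanishes. *)
move=> Ht central_v; have gen_br0 := test_hom_central _ central_v.
suff coord0 : test_coord t (test_hom t v) = 0 by rewrite /hall_coord coord0 mulr0.
case: t Ht gen_br0 => [[[d p] q] r]; rewrite mem_cat mem_hall1 mem_hall2.
case/orP => [/and4P [/eqP -> lt_pg /eqP -> /eqP ->] | /and4P [/eqP -> lt_pq lt_qg /eqP ->]]
  gen_br0.
- have lt_sg : (slot23 (1, p, 0, 0)%N < g)%N by rewrite /slot23 /=; case: ifP; lia.
  move/(congr1 (@c13 K)): (gen_br0 (1, p, 0, 0)%N _ lt_sg).
  rewrite c13_br /test_gen c12_gen c23_gen /slot12 /slot23 /kron /= eqxx.
  have -> : ((if p == 0%N then 1 else 0) == p)%N = false by case: ifP; lia.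
  by rewrite mul0r sub0r mul1r => /eqP; rewrite oppr_eq0 => /eqP.
- have /and3P [ne_p ne_q lt_3] := third_spec lt_pq.
  move/(congr1 (@c14 K)): (gen_br0 (2, p, q, 0)%N _ (leq_trans lt_3 g_ge3)).
  rewrite c14_br /test_gen c12_gen c24_gen c13_gen c34_gen /slot12 /slot34 /kron /=.
  rewrite (negbTE ne_p) eqxx !mul0r !subr0 addr0 sub0r mul1r.
  by move=> /eqP; rewrite oppr_eq0 => /eqP.
Qed.

Lemma uniq_hall12 : uniq (hall1 g ++ hall2 g).
Proof. by have := uniq_hall g; rewrite /hall catA cat_uniq => /andP []. Qed.

Lemma hall_basis_cat12 : hall_basis = map hall_elt (hall1 g ++ hall2 g) ++ map hall_elt (hall3 g).
Proof. by rewrite /hall_basis /hall catA map_cat. Qed.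

Lemma hall3_sub_center : (<<map hall_elt (hall3 g)>> <= lie_center br)%VS.
Proof.
apply/span_subvP => _ /mapP [[[[d i] j] k] + ->]; rewrite mem_hall3 => /and5P [/eqP -> _ _ _ _].
by apply/(mem_lie_center lieL) => z; rewrite hall_elt3 nilL.
Qed.

Lemma lie_center_cap_hall12 : (lie_center br :&: <<map hall_elt (hall1 g ++ hall2 g)>> = 0)%VS.
Proof.
have sub12 : {subset hall1 g ++ hall2 g <= hall g}.
  by move=> t t12; rewrite /hall catA mem_cat t12.
have [_ sep12] := free_hall_sub uniq_hall12 sub12.
apply/eqP; rewrite -subv0; apply/subvP => v /memv_capP [/(mem_lie_center lieL) central_v v12].
by rewrite memv0; apply/eqP/sep12 => // t t12; apply: hall_coord_central.
Qed.

Lemma dim_lie_center : \dim (lie_center br) = size (hall3 g).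
Proof.
have free12 : free (map hall_elt (hall1 g ++ hall2 g)).
  by have := free_hall_basis; rewrite hall_basis_cat12 => /catl_free.
have free3 : free (map hall_elt (hall3 g)).
  by have := free_hall_basis; rewrite hall_basis_cat12 => /catr_free.
apply/eqP; rewrite eqn_leq -{2}(size_map hall_elt) -(eqP free3) dimvS ?hall3_sub_center //.
have := dimvS (subvf (lie_center br + <<map hall_elt (hall1 g ++ hall2 g)>>)%VS).
rewrite dimv_disjoint_sum ?lie_center_cap_hall12 // dim_free_nilp3 (eqP free12).
by rewrite size_map size_cat size_hall1 size_hall2; lia.
Qed.

(* [x_a, u_m] is a single Hall element of degree 3, except [x_0, u_1], which is
   (3, 1, 0, 2) - (3, 2, 0, 1) by Jacobi; the value is 1 exactly on the [x_m, u_m]. *)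
Definition index_form_value (t : label) : K^o := let: (d, i, j, k) := t in
  if [&& d == 3, j == 0 & 0 < k]%N then (i == (if k == 1%N then 0%N else k))%:R
  else if [&& d == 3, j == 1 & k == 2]%N then (i == 1%N)%:R else 0.

Lemma index_form_spec : exists l : 'Hom(L, K^o),
  (forall a b, (a < g)%N -> (b < g)%N -> l (br (X a) (X b)) = 0) /\
  (forall a m, (a < g)%N -> (m < g)%N -> l (br (X a) (u m)) = (a == m)%:R).
Proof.
have [f f_hall] := linear_of_free hall_basis (map index_form_value (hall g)).
have f_hall_elt s : s \in hall g -> f (hall_elt s) = index_form_value s.
  move=> Hs; move: (f_hall free_hall_basis); rewrite !size_map -map_comp => /(_ erefl).
  by move/eq_in_map/(_ s Hs).
exists (linfun f); split=> [a b lt_ag lt_bg | a m lt_ag lt_mg]; rewrite lfunE /=.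
  case: (ltngtP a b) => [lt_ab | lt_ba | ->].
  - by rewrite -hall_elt2 f_hall_elt // mem_hall; lia.
  - by rewrite (brC lieL) linearN -hall_elt2 f_hall_elt ?oppr0 // mem_hall; lia.
  - by rewrite (br_alt lieL) linear0.
rewrite /u; case: (m =P 0%N) => [-> | m_neq0].
  by rewrite -hall_elt3 f_hall_elt ?mem_hall /=; [case: (a =P 0%N) | lia].
case: (m =P 1%N) => [-> | m_neq1].
  case: (a =P 0%N) => [-> | a_neq0].
    rewrite (br_jacobiD lieL) linearB -!hall_elt3 !f_hall_elt ?mem_hall /=; try lia.
    by rewrite subrr.
  by rewrite -hall_elt3 f_hall_elt ?mem_hall //; lia.
rewrite -hall_elt3 f_hall_elt ?mem_hall /=; last by lia.
have m_pos : (0 < m)%N by lia.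
by rewrite m_pos; move/eqP/negbTE: m_neq1 => ->.
Qed.
End FreeNilp3.

Unset Implicit Arguments.

Theorem theorem3p4 (K : fieldType) (g : nat) (L : vectType K)
  (br : L -> L -> L) (x : 'I_g -> L) :
  [pchar K] =i pred0 -> (3 <= g)%N -> free_nilp3 br x ->
  exists n : nat, lie_index br n /\
    [/\ (n + g = \dim (lie_center br) + 'C(g, 2))%N,
        (n + 2 * g = \dim (fullv : {vspace L}))%N &
        (6 * n + 11 * g = 2 * g ^ 3 + 3 * g ^ 2)%N].
Proof.
case: g x => [|gp] x char0 g_ge3 freeL //.
have two_neq0 : (2%:R : K) != 0 by rewrite (pcharf0P K).1.
have dimL := dim_free_nilp3 freeL two_neq0.
have dimZ := dim_lie_center freeL two_neq0 g_ge3.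
have [l [l_XX l_Xu]] := index_form_spec freeL two_neq0 g_ge3.
have stab_le := dim_stab_index_form freeL l_XX l_Xu.
have stab_ge := dim_stab_ge freeL two_neq0.
exists (\dim (fullv : {vspace L}) - 2 * gp.+1)%N; split.
  by split=> [|l']; [exists l; have := stab_ge l | have := stab_ge l']; lia.
rewrite dimZ dimL; have := size_hall3 gp.+1; have /= := bin2_mul2 gp.+1.
by split; nia.
Qed.
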